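(* Let $C$ be a TDD respecting a vtree $T$, and let $h,h'$ be two twin $t_1$-nodes of $C$ for some non-root node $t_1$ of $T$. Then the circuit obtained from $C$ by contracting $h$ and $h'$ is again a TDD respecting $T$ and computes the same Boolean function as $C$.
   Context: A vtree over $X$ is a rooted tree whose internal nodes have exactly two ordered children and whose leaves are labeled bijectively by $X$; $X_t$ is the set of variables below node $t$. An nTDD $C=(N,E)$ respecting $T$ has nodes $N=\biguplus_t N_t$ ($t$-nodes); leaf $t$-nodes (leaf labeled $x$) carry a label in $\{x,\neg x,1,0\}$ and compute that literal/constant; an internal $t$-node $g$ with children $t_1,t_2$ has inputs $E(g)\subseteq N_{t_1}\times N_{t_2}$ and computes $f_g=\bigvee_{(g_1,g_2)\in E(g)}(f_{g_1}\wedge f_{g_2})$ over $X_t$ (false if $E(g)=\emptyset$); the distinguished root-node $\mathrm{out}$ gives $f_C=f_{\mathrm{out}}$. A TDD is an nTDD such that for every leaf $t$ labeled $x$, $N_t$ has at most one node labeled $x$, at most one labeled $\neg x$, at most one labeled $1$, and if one is labeled $1$ all others are labeled $0$; and for every internal $t$, distinct $t$-nodes have disjoint input sets. Twins: let $t_1$ be a non-root node of $T$ with parent $t$ and sibling $t_2$. For a $t_1$-node $h$ and a $t$-node $g$, $\mathrm{sib}_g(h)$ is the set of $t_2$-nodes $h_2$ such that the pair formed by $h$ and $h_2$ (in the order of the children of $t$) belongs to $E(g)$. Distinct $t_1$-nodes $h,h'$ are twins if $\mathrm{sib}_g(h)=\mathrm{sib}_g(h')$ for every $t$-node $g$. Contracting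 twins $h,h'$: replace them by a new $t_1$-node $v$ with $E(v)=E(h)\cup E(h')$ (so that $f_v=f_h\vee f_{h'}$); for every $t$-node $g$, replace each pair in $E(g)$ containing $h$ by the same pair with $v$ in place of $h$, and remove each pair containing $h'$. *)

From HB Require Import structures.
From mathcomp Require Import all_boot.
Set Implicit Arguments. Unset Strict Implicit. Unset Printing Implicit Defensive.

Inductive vtree (X : Type) : Type :=
| VLeaf of X
| VNode of vtree X & vtree X.
Arguments VLeaf {X} _.
Arguments VNode {X} _ _.

Fixpoint leaves (X : Type) (t : vtree X) : seq X :=
  match t with VLeaf x => [:: x] | VNode l r => leaves l ++ leaves r end.

Definition is_vtree (X : finType) (t : vtree X) : Prop :=
  uniq (leaves t) /\ forall x : X, x \in leaves t.

(* Nodes of a vtree are addressed by paths from the root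
   (false = left child, true = right child). The children of the node
   at address p are at addresses rcons p false and rcons p true. *)
Fixpoint subtree (X : Type) (t : vtree X) (p : seq bool) : option (vtree X) :=
  match p with
  | [::] => Some t
  | b :: p' => match t with
               | VLeaf _ => None
               | VNode l r => subtree (if b then r else l) p'
               end
  end.

(* Leaf labels: x, ~x, 1, 0 (x is the variable labelling the vtree leaf). *)
Inductive lit := LPos | LNeg | LOne | LZero.

Definition lit_eqb (a b : lit) : bool :=
  match a, b with
  | LPos, LPos | LNeg, LNeg | LOne, LOne | LZero, LZero => true
  | _, _ => false end.
Lemma lit_eqP : Equality.axiom lit_eqb.
Proof. by case; case; constructor. Qed.
HB.instance Definition _ := hasDecEq.Build lit lit_eqP.

(* A circuit with nodes drawn from an ambient finite type V.
   nodes : the node set N; pos g : the vtree node t with g in N_t;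
   lab g : the label of g (meaningful for leaf t-nodes);
   edges g : the input set E(g) (meaningful for internal t-nodes);
   out : the distinguished output node. *)
Record circuit (V : finType) := Circuit {
  nodes : {set V};
  pos : V -> seq bool;
  lab : V -> lit;
  edges : V -> {set V * V};
  out : V }.

Section Circ.
Variables (X V : finType).
Implicit Types (T : vtree X) (C : circuit V).

(* f_g, where t is the subtree of T rooted at the vtree node of g *)
Fixpoint evalv C (t : vtree X) (g : V) (a : X -> bool) : bool :=
  match t with
  | VLeaf x => match lab C g with
               | LPos => a x | LNeg => ~~ a x | LOne => true | LZero => false end
  | VNode l r => [exists e in edges C g, evalv C l e.1 a && evalv C r e.2 a]
  end.

Definition fC T C (a : X -> bool) : bool := evalv C T (out C) a.

Definition is_nTDD T C : Prop :=
  [/\ out C \in nodes C, pos C (out C) = [::],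
      (forall g, g \in nodes C -> subtree T (pos C g) <> None) &
      (forall g l r, g \in nodes C -> subtree T (pos C g) = Some (VNode l r) ->
         forall e, e \in edges C g ->
           [/\ e.1 \in nodes C, e.2 \in nodes C,
               pos C e.1 = rcons (pos C g) false & pos C e.2 = rcons (pos C g) true])].

Definition is_TDD T C : Prop :=
  [/\ is_nTDD T C,
      (forall g g' x, g \in nodes C -> g' \in nodes C ->
         subtree T (pos C g) = Some (VLeaf x) -> pos C g' = pos C g ->
         lab C g = lab C g' -> lab C g != LZero -> g = g'),
      (forall g g' x, g \in nodes C -> g' \in nodes C ->
         subtree T (pos C g) = Some (VLeaf x) -> pos C g' = pos C g ->
         lab C g = LOne -> g != g' -> lab C g' = LZero) &
      (forall g g' l r, g \in nodes C -> g' \in nodes C ->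
         subtree T (pos C g) = Some (VNode l r) -> pos C g' = pos C g ->
         g != g' -> [disjoint edges C g & edges C g'])].

(* The pair formed by h (a child of t on side b) and h2 (on side ~~ b),
   in the order of the children of t. *)
Definition opair (b : bool) (h h2 : V) : V * V := if b then (h2, h) else (h, h2).

(* sib_g(h) for t1 = rcons p b, t = p, t2 = rcons p (~~ b) *)
Definition sib C (p : seq bool) (b : bool) (g h : V) : {set V} :=
  [set h2 | [&& h2 \in nodes C, pos C h2 == rcons p (~~ b) & opair b h h2 \in edges C g]].

Definition twins C (p : seq bool) (b : bool) (h h' : V) : Prop :=
  [/\ h \in nodes C, h' \in nodes C, pos C h = rcons p b /\ pos C h' = rcons p b,
      h != h' &
      forall g, g \in nodes C -> pos C g = p -> sib C p b g h = sib C p b g h'].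

(* Label of the merged node when t1 is a leaf: the literal computing the
   disjunction of the two literals. *)
Definition or_lit (a b : lit) : lit :=
  match a, b with
  | LOne, _ | _, LOne => LOne
  | LPos, LNeg | LNeg, LPos => LOne
  | LZero, c => c
  | c, LZero => c
  | LPos, LPos => LPos
  | LNeg, LNeg => LNeg
  end.

(* Contracting twins h, h' (t-nodes' parent address p): the new node v
   reuses the name h; h' is deleted. *)
Definition contract C (p : seq bool) (h h' : V) : circuit V :=
  {| nodes := nodes C :\ h';
     pos := pos C;
     lab := fun x => if x == h then or_lit (lab C h) (lab C h') else lab C x;
     edges := fun x =>
       if x == h then edges C h :|: edges C h'
       else if pos C x == p then
         [set e in edges C x | (e.1 != h') && (e.2 != h')]
       else edges C x;
     out := out C |}.

End Circ.

(* Twins h, h' sit at the same vtree node t1 = p.b, so only the t-nodes g at p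
   can take them as inputs, and there the pairs (h, k) and (h', k) occur together.
   After contraction the merged node computes f_h || f_h', and a pair (h', k)
   of g is simulated by the surviving (h, k); so, by induction on the vtree,
   every node other than h computes the same function as before, and the
   output in particular.  The TDD conditions survive: at a leaf the merged
   label is the disjunction of two compatible literals, hence compatible with
   every other label there; at an internal node the inputs of the merged node
   are those of h and h', which were disjoint from those of the other t1-nodes. *)

From mathcomp Require Import all_boot.

Set Implicit Arguments.
Unset Strict Implicit.
Unset Printing Implicit Defensive.

Lemma subtree_nil (X : Type) (t : vtree X) : subtree t [::] = Some t.
Proof. by case: t. Qed.

Lemma subtree_rcons (X : Type) (T : vtree X) q l r c :
  subtree T q = Some (VNode l r) -> subtree T (rcons q c) = Some (if c then r else l).
Proof.
elim: q T => [|d q IH] [x|l' r'] //=; last exact: IH.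
by move=> [-> ->]; rewrite subtree_nil.
Qed.

Lemma existsb_setU (T : finType) (A B : {set T}) (P : pred T) :
  [exists x in A :|: B, P x] = [exists x in A, P x] || [exists x in B, P x].
Proof.
apply/existsP/orP => [[x /andP[]]|[] /existsP[x /andP[xA Px]]].
- by rewrite inE => /orP[] xAB Px; [left|right]; apply/existsP; exists x; rewrite xAB.
- by exists x; rewrite inE xA.
- by exists x; rewrite inE xA orbT.
Qed.

Section Sides.
Variable V : finType.

Definition side (b : bool) (e : V * V) : V := if b then e.2 else e.1.

Lemma side_opair b (k k2 : V) : side b (opair b k k2) = k.
Proof. by case: b. Qed.

Lemma side_opairN b (k k2 : V) : side (~~ b) (opair b k k2) = k2.
Proof. by case: b. Qed.

Lemma opair_side b e : opair b (side b e) (side (~~ b) e) = e.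
Proof. by case: b; case: e. Qed.

Lemma andb_side (F : bool -> V -> bool) b e :
  F b (side b e) && F (~~ b) (side (~~ b) e) = F false e.1 && F true e.2.
Proof. by case: b; rewrite //= andbC. Qed.

(* The parent step of the contraction: a dropped pair (h', k) is matched by the
   pair (h, k), and h now also computes the function of h'. *)
Lemma exists_twin_merge (E : {set V * V}) b (h h' : V) (P Q : pred V) :
  h != h' -> (forall k, (opair b h k \in E) = (opair b h' k \in E)) ->
  [exists e in E, [&& side b e != h', P (side b e) || (side b e == h) && P h'
                    & Q (side (~~ b) e)]]
  = [exists e in E, P (side b e) && Q (side (~~ b) e)].
Proof.
move=> hh' twinE; apply/existsP/existsP => [[e /and4P[eE _ Pe Qe]]|[e /and3P[eE Pe Qe]]].
- case/orP: Pe => [Pe|/andP[/eqP eh Ph']]; first by exists e; rewrite eE Pe Qe.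
  exists (opair b h' (side (~~ b) e)).
  by rewrite side_opair side_opairN Ph' Qe -twinE -eh opair_side eE.
- have [eh'|ne'] := eqVneq (side b e) h'; last by exists e; rewrite eE ne' Pe Qe.
  exists (opair b h (side (~~ b) e)).
  by rewrite side_opair side_opairN hh' eqxx -eh' Pe Qe orbT twinE -eh' opair_side eE.
Qed.

End Sides.

Definition lit_value (c : lit) (v : bool) : bool :=
  match c with LPos => v | LNeg => ~~ v | LOne => true | LZero => false end.

Lemma lit_value_or a a' v : lit_value (or_lit a a') v = lit_value a v || lit_value a' v.
Proof. by case: a; case: a'; case: v. Qed.

Definition compat_lit (c d : lit) : bool :=
  [|| c == LZero, d == LZero | [&& c != LOne, d != LOne & c != d]].

Lemma compat_litC c d : compat_lit c d = compat_lit d c.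
Proof. by case: c; case: d. Qed.

Lemma compat_or_lit a a' c :
  compat_lit a a' -> compat_lit a c -> compat_lit a' c -> compat_lit (or_lit a a') c.
Proof. by case: a; case: a'; case: c. Qed.

Section TDDConditions.
Variables (X V : finType) (T : vtree X) (C : circuit V).

Definition leaf_labels_compat : Prop :=
  forall g g' x, g \in nodes C -> g' \in nodes C ->
    subtree T (pos C g) = Some (VLeaf x) -> pos C g' = pos C g -> g != g' ->
    compat_lit (lab C g) (lab C g').

Definition inputs_disjoint : Prop :=
  forall g g' l r, g \in nodes C -> g' \in nodes C ->
    subtree T (pos C g) = Some (VNode l r) -> pos C g' = pos C g -> g != g' ->
    [disjoint edges C g & edges C g'].

Lemma is_TDD_compat :
  is_TDD T C <-> [/\ is_nTDD T C, leaf_labels_compat & inputs_disjoint].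
Proof.
split=> [[nT uniq_lab one_lab disj]|[nT compat disj]]; split=> // g g' x gN g'N st pe.
- move=> gg'.
  have st' : subtree T (pos C g') = Some (VLeaf x) by rewrite pe.
  have same0 : (lab C g == lab C g') ==> (lab C g == LZero).
    apply/implyP => /eqP E; apply: contraTT gg' => nz; apply/negPn/eqP.
    exact: uniq_lab g g' x gN g'N st pe E nz.
  have one0 : (lab C g == LOne) ==> (lab C g' == LZero).
    by apply/implyP => /eqP/(one_lab g g' x gN g'N st pe)/(_ gg') ->.
  have one0' : (lab C g' == LOne) ==> (lab C g == LZero).
    apply/implyP => /eqP/(one_lab g' g x g'N gN st' (esym pe)).
    by rewrite eq_sym => /(_ gg') ->.
  by move: same0 one0 one0'; case: (lab C g); case: (lab C g').
- move=> E nz; apply/eqP; apply: contraNT nz => gg'.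
  by move: (compat g g' x gN g'N st pe gg'); rewrite -E; case: (lab C g).
- move=> E gg'; apply/eqP.
  by move: (compat g g' x gN g'N st pe gg'); rewrite E; case: (lab C g').
Qed.

Lemma input_side g l r e c : is_nTDD T C ->
  g \in nodes C -> subtree T (pos C g) = Some (VNode l r) -> e \in edges C g ->
  side c e \in nodes C /\ pos C (side c e) = rcons (pos C g) c.
Proof.
by case=> _ _ _ inputs gN st eE; have [] := inputs g l r gN st e eE; case: c.
Qed.

End TDDConditions.

Section Contraction.
Variables (X V : finType) (T : vtree X) (C : circuit V) (p : seq bool) (b : bool).
Variables h h' : V.
Hypothesis C_nTDD : is_nTDD T C.
Hypotheses (hN : h \in nodes C) (h'N : h' \in nodes C) (hh' : h != h').
Hypotheses (pos_h : pos C h = rcons p b) (pos_h' : pos C h' = rcons p b).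
Hypothesis twin_sib :
  forall g, g \in nodes C -> pos C g = p -> sib C p b g h = sib C p b g h'.

Local Notation C' := (contract C p h h').

Lemma pos_h_neq_p : pos C h != p.
Proof. by rewrite pos_h; apply/eqP => /(congr1 size); rewrite size_rcons => /esym/n_Sn. Qed.

Lemma out_neq_twin : (out C != h) && (out C != h').
Proof.
case: C_nTDD => _ outP _ _; apply/andP; split; apply/eqP => E;
  by move: outP; rewrite E ?pos_h ?pos_h'; case: p.
Qed.

Lemma input_not_twin g l r e c :
  g \in nodes C -> subtree T (pos C g) = Some (VNode l r) -> e \in edges C g ->
  pos C g != p -> (side c e != h) && (side c e != h').
Proof.
move=> gN st eE gp; have [_ pe] := input_side c C_nTDD gN st eE.
apply/andP; split; apply/eqP => E; move: pe; rewrite E ?pos_h ?pos_h' => /rcons_inj[pE _];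
  by rewrite pE eqxx in gp.
Qed.

Lemma coside_not_twin g l r e :
  g \in nodes C -> subtree T (pos C g) = Some (VNode l r) -> e \in edges C g ->
  pos C g = p -> (side (~~ b) e != h) && (side (~~ b) e != h').
Proof.
move=> gN st eE gp; have [_ pe] := input_side (~~ b) C_nTDD gN st eE.
apply/andP; split; apply/eqP => E; move: pe; rewrite E ?pos_h ?pos_h' gp => /rcons_inj[];
  by case: b.
Qed.

Lemma twin_edges g l r k :
  g \in nodes C -> subtree T (pos C g) = Some (VNode l r) -> pos C g = p ->
  (opair b h k \in edges C g) = (opair b h' k \in edges C g).
Proof.
move=> gN st gp.
have input_k k0 : opair b k0 k \in edges C g -> (k \in nodes C) && (pos C k == rcons p (~~ b)).
  move/(input_side (~~ b) C_nTDD gN st); rewrite side_opairN gp => -[kN pk].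
  by rewrite kN pk eqxx.
case kP: ((k \in nodes C) && (pos C k == rcons p (~~ b))).
- by move: (twin_sib gN gp) => /setP/(_ k); rewrite !inE !andbA kP.
- by rewrite (contraFF (input_k h) kP) (contraFF (input_k h') kP).
Qed.

Lemma mem_edges_contract g e :
  e \in edges C' g -> e \in edges C g \/ g = h /\ e \in edges C h'.
Proof.
rewrite /=; case: eqP => [->|_]; first by rewrite inE => /orP[]; [left|right].
by case: ifP => _; [rewrite inE => /andP[]|]; left.
Qed.

Lemma contract_inputs_not_h' g l r e :
  g \in nodes C -> subtree T (pos C g) = Some (VNode l r) -> e \in edges C' g ->
  (e.1 != h') && (e.2 != h').
Proof.
move=> gN st eE'; have [gp|gp] := eqVneq (pos C g) p.
  have gh : g != h by apply: contra_neq pos_h_neq_p => <-.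
  by move: eE'; rewrite /= (negbTE gh) gp eqxx inE => /andP[].
have off_p k : k \in nodes C -> pos C k = pos C g -> e \in edges C k ->
    (e.1 != h') && (e.2 != h').
  move=> kN pk eE; rewrite -pk in st gp.
  have /andP[_ n1] := input_not_twin false kN st eE gp.
  by have /andP[_ n2] := input_not_twin true kN st eE gp; apply/andP.
case: (mem_edges_contract eE') => [eE|[gh eE]]; first exact: off_p eE.
by apply: off_p eE; rewrite // gh pos_h pos_h'.
Qed.

Lemma evalv_contract (a : X -> bool) t q : subtree T q = Some t ->
  forall g, g \in nodes C -> pos C g = q ->
  evalv C' t g a = evalv C t g a || (g == h) && evalv C t h' a.
Proof.
elim: t q => [x|l IHl r IHr] q st g gN pg /=.
  by case: eqP => [->|_]; [exact: lit_value_or | rewrite orbF].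
have IH_input g0 e c : g0 \in nodes C -> pos C g0 = q -> e \in edges C g0 ->
    evalv C' (if c then r else l) (side c e) a
    = evalv C (if c then r else l) (side c e) a
      || (side c e == h) && evalv C (if c then r else l) h' a.
  move=> g0N pg0 eE; rewrite -pg0 in st.
  have [eN pe] := input_side c C_nTDD g0N st eE.
  case: c eN pe => eN pe.
    exact: IHr (subtree_rcons true st) _ eN pe.
  exact: IHl (subtree_rcons false st) _ eN pe.
have off_p g0 e : g0 \in nodes C -> pos C g0 = q -> pos C g0 != p -> e \in edges C g0 ->
    evalv C' l e.1 a && evalv C' r e.2 a = evalv C l e.1 a && evalv C r e.2 a.
  move=> g0N pg0 g0p eE; have st0 : subtree T (pos C g0) = Some (VNode l r) by rewrite pg0.
  have /andP[n1 _] := input_not_twin false g0N st0 eE g0p.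
  have /andP[n2 _] := input_not_twin true g0N st0 eE g0p.
  by rewrite (IH_input g0 e false) // (IH_input g0 e true) // (negbTE n1) (negbTE n2) !orbF.
have [eg|gh] := eqVneq g h.
  subst g.
  have ph'q : pos C h' = q by rewrite pos_h' -pos_h.
  rewrite existsb_setU; congr (_ || _); apply: eq_existsb_in => e eE.
    exact: off_p pg pos_h_neq_p eE.
  by apply: off_p ph'q _ eE; rewrite // pos_h' -pos_h pos_h_neq_p.
rewrite andFb orbF; have [gp|gp] := eqVneq (pos C g) p; last first.
  by apply: eq_existsb_in => e; exact: off_p.
have st0 : subtree T (pos C g) = Some (VNode l r) by rewrite pg.
pose F c k := evalv C (if c then r else l) k a.
transitivity [exists e in edges C g, [&& side b e != h',
  F b (side b e) || (side b e == h) && F b h' & F (~~ b) (side (~~ b) e)]].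
  apply: eq_existsb => e; rewrite inE -andbA; apply: andb_id2l => eE.
  have [n2 n2'] : side (~~ b) e != h /\ side (~~ b) e != h'.
    by apply/andP; exact: coside_not_twin gN st0 eE gp.
  pose F' c k := evalv C' (if c then r else l) k a.
  rewrite -(andb_side (fun _ k => k != h') b) -(andb_side F' b) /F' /=.
  by rewrite (IH_input g e b) // (IH_input g e (~~ b)) // (negbTE n2) n2' andbT orbF.
rewrite (exists_twin_merge (F b) (F (~~ b)) hh').
  by apply: eq_existsb_in => e _; rewrite (andb_side F).
by move=> k; exact: twin_edges gN st0 gp.
Qed.

Lemma contract_nTDD : is_nTDD T C'.
Proof.
case: (C_nTDD) => outN outP posN inputs; have /andP[_ outh'] := out_neq_twin.
split=> /=; first by rewrite !inE outh' outN.
- by [].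
- by move=> g; rewrite inE => /andP[_ /posN].
move=> g l r; rewrite inE => /andP[_ gN] st e eE'.
have /andP[n1 n2] := contract_inputs_not_h' gN st eE'.
have [k [kN pk eE]] : exists k, [/\ k \in nodes C, pos C k = pos C g & e \in edges C k].
  case: (mem_edges_contract eE') => [eE|[-> eE]]; first by exists g.
  by exists h'; rewrite pos_h' pos_h.
rewrite -pk in st *; have [m1 m2 p1 p2] := inputs k l r kN st e eE.
by rewrite !inE n1 n2 m1 m2 p1 p2.
Qed.

Hypothesis C_compat : leaf_labels_compat T C.

Lemma compat_merged_label k x :
  k \in nodes C -> k != h -> k != h' ->
  subtree T (pos C h) = Some (VLeaf x) -> pos C k = pos C h ->
  compat_lit (or_lit (lab C h) (lab C h')) (lab C k).
Proof.
move=> kN kh kh' st pk; have ph' : pos C h' = pos C h by rewrite pos_h pos_h'.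
have st' : subtree T (pos C h') = Some (VLeaf x) by rewrite ph'.
apply: compat_or_lit; first exact: C_compat hN h'N st ph' hh'.
  by apply: (C_compat hN kN st pk); rewrite eq_sym.
by apply: (C_compat h'N kN st'); rewrite ?pk // eq_sym.
Qed.

Lemma contract_leaf_compat : leaf_labels_compat T C'.
Proof.
move=> g g' x /=; rewrite !inE => /andP[gh' gN] /andP[g'h' g'N] st pe gg'.
have [eg|gh] := eqVneq g h.
  subst g; rewrite eq_sym in gg'; rewrite (negbTE gg').
  exact: compat_merged_label st pe.
have [eg'|g'h] := eqVneq g' h; last exact: C_compat st pe gg'.
subst g'; have st' : subtree T (pos C h) = Some (VLeaf x) by rewrite pe.
by rewrite compat_litC; apply: compat_merged_label st' (esym pe).
Qed.

Hypothesis C_disj : inputs_disjoint T C.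

Lemma contract_inputs_disjoint : inputs_disjoint T C'.
Proof.
move=> g g' l r /=; rewrite !inE => /andP[gh' gN] /andP[g'h' g'N] st pe gg'.
have ph' : pos C h' = pos C h by rewrite pos_h pos_h'.
have disjC k k' e : k \in nodes C -> k' \in nodes C -> pos C k = pos C g ->
    pos C k' = pos C g -> k != k' -> e \in edges C k -> e \in edges C k' -> False.
  move=> kN k'N pk pk' kk' eE; rewrite -pk in st pk'.
  by rewrite (disjointFr (C_disj kN k'N st pk' kk') eE).
apply/pred0P => e /=; apply/negbTE/negP => /andP[/mem_edges_contract eg /mem_edges_contract eg'].
case: eg => [eE|[eg eE]]; case: eg' => [eE'|[eg' eE']].
- exact: disjC gN g'N erefl pe gg' eE eE'.
- by subst g'; apply: disjC gN h'N erefl _ gh' eE eE'; rewrite ph'.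
- by subst g; apply: disjC h'N g'N _ pe _ eE eE'; rewrite // eq_sym.
- by subst g g'; rewrite eqxx in gg'.
Qed.

End Contraction.

Theorem lemma5 (X V : finType) (T : vtree X) (C : circuit V)
    (p : seq bool) (b : bool) (h h' : V) :
  is_vtree T ->
  is_TDD T C ->
  subtree T (rcons p b) <> None ->
  twins C p b h h' ->
  is_TDD T (contract C p h h') /\
  (forall a : X -> bool, fC T (contract C p h h') a = fC T C a).
Proof.
move=> _ /is_TDD_compat[nT compat disj] _ [hN h'N [ph ph'] hh' twin].
split.
  apply/is_TDD_compat; split.
  - exact: contract_nTDD nT h'N ph ph'.
  - exact: contract_leaf_compat hN h'N hh' ph ph' compat.
  - exact: contract_inputs_disjoint h'N ph ph' disj.
move=> a; have /andP[outh _] := out_neq_twin nT ph ph'.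
case: (nT) => outN outP _ _.
by rewrite /fC (evalv_contract nT h'N hh' ph ph' twin a (subtree_nil T)) // (negbTE outh) orbF.
Qed.
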